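(* Let $\ell$ be a prime dividing $N$ and $s$ the $\ell$-adic valuation of $N$. Suppose that $H$ has a $U_\ell$-operator that acts on $H^\theta$ as multiplication by an element of $\mathcal{O}^\times$. Then $H^\theta$ is the $\mathcal{O}$-span of the elements of the forms $\alpha^{g,h}_{\chi,\psi}$ and $\alpha^{\ell^sg,h}_{\chi,\psi}$ with $\chi\in X_N$, $\psi=\theta\chi^{-1}$, and $g,h$ relatively prime divisors of $N$ with $\ell\nmid gh$ (where, if $H$ is cuspidal at zero, elements with $g$ or $h$ equal to $N$ in the superscript are excluded).
   Context: $p$ is an odd prime, $M$ a positive integer with $p\nmid M\varphi(M)$, $N=Mp$, $\Delta=(\mathbb{Z}/N\mathbb{Z})^\times/\langle-1\rangle$. $H$ is either a space of level $N$ modular symbols — a $\mathbb{Z}_p[\Delta]$-module spanned by symbols $[u:v]$ ($u,v\in\mathbb{Z}/N\mathbb{Z}$ generating the unit ideal) with relations $[u:v]=[-u:-v]=-[-v:u]$, $[u:v]=[u:u+v]+[u+v:v]$, $\langle a\rangle[u:v]=[au:av]$ — or a space of level $N$ cuspidal-at-zero modular symbols, defined the same way but with symbols only for $u,v$ both nonzero and the second relation only for $u\neq-v$. For a prime $\ell\mid N$, a $U_\ell$-operator is a $\mathbb{Z}_p[\Delta]$-linear endomorphism $U_\ell$ of $H$ with $U_\ell[\ell u:v]=\sum_{k=0}^{\ell-1}[u+kN/\ell:v]$ for all $u,v$ with $(\ell u,v)=(1)$ (and $\ell u\neq0$ if $H$ is cuspidal at zero). $\theta:\Delta\to\mathbb{C}_p^\times$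 is a character, $\mathcal{O}=\mathbb{Z}_p[\mu_{\varphi(N)}]$, $X_N=\mathrm{Hom}((\mathbb{Z}/N\mathbb{Z})^\times,\mathcal{O}^\times)$, $e_\theta=\frac1{\varphi(N)}\sum_a\theta^{-1}(a)\langle a\rangle$, $H^\theta=e_\theta(H\otimes\mathcal{O})$, and $\alpha^{g,h}_{\chi,\psi}=\frac1{\varphi(N)^2}\sum_{a,b\in(\mathbb{Z}/N\mathbb{Z})^\times}\chi^{-1}(a)\psi^{-1}(b)[ga:hb]$. *)

From HB Require Import structures.
From mathcomp Require Import all_boot all_order all_fingroup all_algebra.
Set Implicit Arguments. Unset Strict Implicit. Unset Printing Implicit Defensive.
Import GRing.Theory.
Local Open Scope ring_scope.

(* The ideal (u, v) of Z/NZ is the unit ideal: gcd(u, v, N) = 1 (u, v read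
   as their representatives in [0, N)). *)
Definition unimod (N : nat) (u v : 'Z_N) : bool :=
  gcdn (gcdn (val u) (val v)) N == 1%N.

(* (u, v) indexes a symbol [u:v] of the space: unimodular, and in the
   cuspidal-at-zero case both entries are nonzero. *)
Definition valid_pair (cusp : bool) (N : nat) (u v : 'Z_N) : bool :=
  unimod u v && (cusp ==> (u != 0) && (v != 0)).

Definition Olinear (O : pzRingType) (V : lmodType O) (f : V -> V) : Prop :=
  forall (k : O) (x y : V), f (k *: x + y) = k *: f x + f y.

Definition in_span (O : pzRingType) (V : lmodType O) (S : V -> Prop) (x : V)
  : Prop :=
  exists (n : nat) (c : 'I_n -> O) (s : 'I_n -> V),
    (forall i, S (s i)) /\ x = \sum_(i < n) c i *: s i.

(* V is a space of level-N modular symbols (cusp = false) or of level-N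
   cuspidal-at-zero modular symbols (cusp = true), over the scalars O, with
   symbol map sym (only its values on valid pairs are meaningful) and
   diamond operators diam a = <a>. *)
Definition modsym_space (cusp : bool) (N : nat) (O : pzRingType)
  (V : lmodType O) (sym : 'Z_N -> 'Z_N -> V) (diam : {unit 'Z_N} -> V -> V)
  : Prop :=
  (forall x : V, in_span (fun y => exists u v, valid_pair cusp u v /\ y = sym u v) x) /\
  [/\ forall u v, valid_pair cusp u v -> sym u v = sym (- u) (- v),
      forall u v, valid_pair cusp u v -> sym u v = - sym (- v) u,
      forall u v, valid_pair cusp u v -> (cusp ==> (u != - v)) ->
                  sym u v = sym u (u + v) + sym (u + v) v,
      forall a, Olinear (diam a) &
      forall a u v, valid_pair cusp u v ->
                  diam a (sym u v) = sym (val a * u) (val a * v)].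

Definition U_op (cusp : bool) (N : nat) (O : pzRingType) (V : lmodType O)
  (sym : 'Z_N -> 'Z_N -> V) (diam : {unit 'Z_N} -> V -> V) (ell : nat)
  (U : V -> V) : Prop :=
  [/\ Olinear U,
      forall a x, U (diam a x) = diam a (U x) &
      forall u v : 'Z_N, valid_pair cusp (ell%:R * u) v ->
        U (sym (ell%:R * u) v) =
          \sum_(k < ell) sym (u + (k * (N %/ ell))%:R) v].

Definition is_char (N : nat) (O : pzRingType) (chi : {unit 'Z_N} -> O) : Prop :=
  chi 1%g = 1 /\ forall a b, chi (a * b)%g = chi a * chi b.

(* A character of Delta = (Z/NZ)^x / <-1>, viewed as a character of
   (Z/NZ)^x that is trivial on -1. *)
Definition is_char_Delta (N : nat) (O : pzRingType) (th : {unit 'Z_N} -> O)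
  : Prop :=
  is_char th /\ forall a b : {unit 'Z_N}, val a = - val b -> th a = th b.

Definition etheta (N : nat) (O : unitRingType) (V : lmodType O)
  (diam : {unit 'Z_N} -> V -> V) (th : {unit 'Z_N} -> O) (x : V) : V :=
  ((totient N)%:R)^-1 *: \sum_(a : {unit 'Z_N}) th (a^-1)%g *: diam a x.

Definition alpha (N : nat) (O : unitRingType) (V : lmodType O)
  (sym : 'Z_N -> 'Z_N -> V) (g h : nat) (chi psi : {unit 'Z_N} -> O) : V :=
  (((totient N)%:R) ^+ 2)^-1 *:
    \sum_(a : {unit 'Z_N}) \sum_(b : {unit 'Z_N})
       (chi (a^-1)%g * psi (b^-1)%g) *: sym (g%:R * val a) (h%:R * val b).

From HB Require Import structures.
From mathcomp Require Import all_boot all_order all_fingroup all_algebra.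
From mathcomp Require Import all_solvable ring zify.
Set Implicit Arguments. Unset Strict Implicit. Unset Printing Implicit Defensive.
Import GRing.Theory.
Local Open Scope group_scope.
Local Open Scope ring_scope.

(* Each alpha^{g,h}_{chi,psi} with psi = theta chi^-1 is an eigenvector of
   every diamond operator <d> with eigenvalue theta(d), hence is fixed by
   e_theta; this gives one inclusion.  Conversely, H^theta is spanned by the
   e_theta [u:v], and [u:v] = [g a : h b] with g = gcd(u,N), h = gcd(v,N) and
   units a, b.  Since O contains the phi(N)-th roots of unity and phi(N) is
   invertible, the indicator of 1 on the abelian group (Z/NZ)^x is an
   O-combination of characters; expanding it writes e_theta [g a : h b] as a
   combination of the alpha^{g,h}.  As g and h are coprime, ell divides at
   most one of them, and [u:v] = -[-v:u] lets us assume ell does not divide h.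
   Finally, if ell^2 g' | N then alpha^{ell g',h} = c^-1 e_theta U alpha^{ell g',h},
   and U [ell g' a : h b] is a sum of symbols [g' a + k N/ell : h b] whose
   first entries still have gcd g' with N; this lowers the power of ell in g
   until it is ell^0 or ell^s. *)

Section Span.
Variables (O : pzRingType) (V : lmodType O).
Implicit Types (S T : V -> Prop) (f : V -> V).

Lemma Olinear0 f : Olinear f -> f 0 = 0.
Proof.
move=> lin_f; have := lin_f 1 0 0; rewrite !scale1r !addr0 => f00.
by apply: (addrI (f 0)); rewrite addr0 -f00.
Qed.

Lemma OlinearD f : Olinear f -> forall x y, f (x + y) = f x + f y.
Proof. by move=> lin_f x y; have := lin_f 1 x y; rewrite !scale1r. Qed.

Lemma OlinearZ f : Olinear f -> forall k x, f (k *: x) = k *: f x.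
Proof. by move=> lin_f k x; rewrite -[k *: x]addr0 lin_f Olinear0 // addr0. Qed.

Lemma Olinear_sum f (I : Type) (r : seq I) (P : pred I) (F : I -> V) :
  Olinear f -> f (\sum_(i <- r | P i) F i) = \sum_(i <- r | P i) f (F i).
Proof. by move=> lin_f; apply: big_morph; [apply: OlinearD | apply: Olinear0]. Qed.

Lemma Olinear_comp f1 f2 : Olinear f1 -> Olinear f2 -> Olinear (f1 \o f2).
Proof. by move=> lin1 lin2 k x y /=; rewrite lin2 lin1. Qed.

Lemma in_span0 S : in_span S 0.
Proof. by exists 0%N, (fun=> 0), (fun=> 0); split=> [[] //|]; rewrite big_ord0. Qed.

Lemma in_span_gen S x : S x -> in_span S x.
Proof.
by move=> Sx; exists 1%N, (fun=> 1), (fun=> x); split=> //; rewrite big_ord1 scale1r.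
Qed.

Lemma in_spanZ S k x : in_span S x -> in_span S (k *: x).
Proof.
case=> n [c [s [Ss ->]]]; exists n, (fun i => k * c i), s; split=> //.
by rewrite scaler_sumr; apply: eq_bigr => i _; rewrite scalerA.
Qed.

Lemma in_spanD S x y : in_span S x -> in_span S y -> in_span S (x + y).
Proof.
case=> n [c [s [Ss ->]]] [m [d [t [St ->]]]].
pose glue (A : Type) (a : 'I_n -> A) (b : 'I_m -> A) (i : 'I_(n + m)) :=
  match split i with inl j => a j | inr j => b j end.
exists (n + m)%N, (glue _ c d), (glue _ s t); split.
  by move=> i; rewrite /glue; case: split.
rewrite big_split_ord; congr (_ + _); apply: eq_bigr => i _.
  by rewrite /glue (unsplitK (inl i : 'I_n + 'I_m)).
by rewrite /glue (unsplitK (inr i : 'I_n + 'I_m)).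
Qed.

Lemma in_span_sum S (I : Type) (r : seq I) (P : pred I) (F : I -> V) :
  (forall i, P i -> in_span S (F i)) -> in_span S (\sum_(i <- r | P i) F i).
Proof. by move=> SF; apply: big_ind => //; [apply: in_span0 | apply: in_spanD]. Qed.

Lemma in_span_ind S (Q : V -> Prop) :
  Q 0 -> (forall x y, Q x -> Q y -> Q (x + y)) -> (forall k x, Q x -> Q (k *: x)) ->
  (forall x, S x -> Q x) -> forall x, in_span S x -> Q x.
Proof.
move=> Q0 QD QZ SQ _ [n [c [s [Ss ->]]]].
by apply: big_ind => // i _; apply/QZ/SQ.
Qed.

Lemma in_span_trans S T x :
  (forall y, S y -> in_span T y) -> in_span S x -> in_span T x.
Proof.
move=> ST; apply: in_span_ind => //.
- exact: in_span0.
- exact: in_spanD.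
- exact: in_spanZ.
Qed.

Lemma Olinear_in_span f S T x : Olinear f ->
  (forall y, S y -> in_span T (f y)) -> in_span S x -> in_span T (f x).
Proof.
move=> lin_f ST; apply: (in_span_ind (Q := fun x => in_span T (f x))) => //.
- by rewrite Olinear0 //; apply: in_span0.
- by move=> y z Ty Tz; rewrite OlinearD //; apply: in_spanD.
- by move=> k y Ty; rewrite OlinearZ //; apply: in_spanZ.
Qed.

Lemma Olinear_fix_in_span f S x : Olinear f ->
  (forall y, S y -> f y = y) -> in_span S x -> f x = x.
Proof.
move=> lin_f fS; apply: (in_span_ind (Q := fun x => f x = x)) => //.
- exact: Olinear0.
- by move=> y z fy fz; rewrite OlinearD // fy fz.
- by move=> k y fy; rewrite OlinearZ // fy.
Qed.

End Span.

Lemma sum_expr_root_neq1 (R : idomainType) (r : R) (n : nat) :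
  r ^+ n = 1 -> r != 1 -> \sum_(i < n) r ^+ i = 0.
Proof.
move=> rn1 r_neq1; have /eqP := subrX1 r n.
by rewrite rn1 subrr eq_sym mulf_eq0 subr_eq0 (negPf r_neq1) => /eqP.
Qed.

Section DeltaExpansion.
Variables (gT : finGroupType) (R : idomainType).
Implicit Types (A : {set gT}) (x y z : gT).

Definition char_on A (f : gT -> R) : Prop :=
  f 1%g = 1 /\ {in A &, {morph f : a b / (a * b)%g >-> a * b}}.

Definition delta_expansion A : Prop :=
  exists (I : finType) (c : I -> R) (chi : I -> gT -> R),
    (forall i, char_on A (chi i)) /\
    {in A, forall z, \sum_i c i * chi i z = (z == 1%g)%:R}.

Lemma char_on_expr A f j : char_on A f -> char_on A (fun y => f y ^+ j).
Proof.
by case=> f1 fM; split=> [|a b Aa Ab]; rewrite ?f1 ?expr1n // fM // exprMn.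
Qed.

Section Cycle.
Variables (x : gT) (w : R).
Hypothesis w_prim : #[x]%g.-primitive_root w.
Hypothesis ox_unit : (#[x]%g)%:R \is a @GRing.unit R.

Definition cycle_log y : nat :=
  if [pick i : 'I_#[x]%g | (x ^+ i == y)%g] is Some i then i else 0%N.

Lemma cycle_logK y : y \in <[x]>%g -> (x ^+ cycle_log y)%g = y.
Proof.
case/cyclePmin=> i lt_i_x ->; rewrite /cycle_log; case: pickP => [j /eqP //|].
by move/(_ (Ordinal lt_i_x)); rewrite eqxx.
Qed.

Definition cycle_char y : R := w ^+ cycle_log y.

Lemma cycle_char_eq1 y : y \in <[x]>%g -> (cycle_char y == 1) = (y == 1%g).
Proof. by move=> xy; rewrite -(prim_order_dvd w_prim) order_dvdn cycle_logK. Qed.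

Lemma cycle_char_on : char_on <[x]>%g cycle_char.
Proof.
split=> [|a b xa xb]; first by apply/eqP; rewrite cycle_char_eq1 ?group1.
rewrite /cycle_char -exprD -(prim_expr_mod w_prim) -[RHS](prim_expr_mod w_prim).
by congr (_ ^+ _); apply/eqP; rewrite -eq_expg_mod_order expgD !cycle_logK ?groupM.
Qed.

Lemma cycle_char_order y : cycle_char y ^+ #[x]%g = 1.
Proof. by rewrite /cycle_char -exprM mulnC exprM (prim_expr_order w_prim) expr1n. Qed.

Lemma delta_expansion_cycle : delta_expansion <[x]>%g.
Proof.
exists 'I_#[x]%g, (fun=> (#[x]%g)%:R^-1), (fun (i : 'I_#[x]%g) y => cycle_char y ^+ i).
split.
  by move=> i; apply/char_on_expr/cycle_char_on.
move=> z xz; rewrite -mulr_sumr -(cycle_char_eq1 xz).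
have [->|z_neq1] := eqVneq (cycle_char z) 1.
  rewrite (eq_bigr (fun=> 1)) => [|i _]; last by rewrite expr1n.
  by rewrite sumr_const card_ord mulVr.
by rewrite sum_expr_root_neq1 ?mulr0 ?cycle_char_order.
Qed.

End Cycle.

Lemma delta_expansion_complement (A K H : {group gT}) :
  abelian A -> H \in [complements to K in A] ->
  delta_expansion K -> delta_expansion H -> delta_expansion A.
Proof.
move=> cAA complH [I [c [chi [chiK deltaK]]]] [J [d [psi [psiH deltaH]]]].
have /complP[_ defA] := complH.
have sKA : K \subset A by rewrite -defA mulG_subl.
have sHA : H \subset A by rewrite -defA mulG_subr.
have nsKA : K <| A by rewrite -sub_abelian_normal.
have cKH : H \subset 'C(K) by apply: subset_trans sHA (subset_trans cAA (centS sKA)).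
have dKM := divgrM complH cKH; have rHM := remgrM complH nsKA.
have dK_K y : y \in A -> divgr K H y \in K by rewrite -defA; apply: mem_divgr.
have rH_H y : y \in A -> remgr K H y \in H by rewrite -defA; apply: mem_remgr.
have dK1 : divgr K H 1%g = 1%g by rewrite divgr_id.
have rH1 : remgr K H 1%g = 1%g by rewrite remgr1.
exists (I * J)%type, (fun ij => c ij.1 * d ij.2),
  (fun ij y => chi ij.1 (divgr K H y) * psi ij.2 (remgr K H y)); split.
  move=> [i j]; have [chi1 chiM] := chiK i; have [psi1 psiM] := psiH j.
  split=> [|a b Aa Ab] /=; first by rewrite dK1 rH1 chi1 psi1 mulr1.
  by rewrite dKM // rHM // chiM ?psiM ?dK_K ?rH_H // mulrACA.
move=> z Az; rewrite -(pair_bigA _ (fun i j =>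
  c i * d j * (chi i (divgr K H z) * psi j (remgr K H z)))) /=.
under eq_bigr do under eq_bigr do rewrite mulrACA.
rewrite -big_distrlr /= deltaK ?dK_K // deltaH ?rH_H // -natrM mulnb.
congr (nat_of_bool _)%:R; apply/andP/eqP => [[/eqP dz1 /eqP rz1]|->].
  by rewrite (divgr_eq K H z) dz1 rz1 mulg1.
by rewrite dK1 rH1.
Qed.

Lemma delta_expansion_abelian (n : nat) (w : R) (A : {group gT}) :
  n.-primitive_root w -> n%:R \is a @GRing.unit R ->
  abelian A -> (#|A| %| n)%N -> delta_expansion A.
Proof.
move=> w_prim n_unit; have [m] := ubnP #|A|.
elim: m A => // m IHm A leAm cAA dvdAn.
case: (boolP (A :==: 1%g)) => [/eqP A1|ntA].
  exists 'I_1, (fun=> 1), (fun _ _ => 1); split=> [_|z].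
    by split=> // a b _ _; rewrite mulr1.
  by rewrite A1 inE => /eqP ->; rewrite big_ord1 mulr1 eqxx.
have [x Ax expA] := exponent_witness (abelian_nil cAA).
have dvd_x_n : (#[x]%g %| n)%N by rewrite (dvdn_trans (order_dvdG Ax)).
have ox_unit : (#[x]%g)%:R \is a @GRing.unit R.
  by move: n_unit; rewrite -(divnK dvd_x_n) natrM unitrM => /andP[].
have /splitsP[H complH] := abelian_splits Ax (esym expA) cAA.
have /complP[tiH defA] := complH.
have sHA : H \subset A by rewrite -defA mulG_subr.
have ox_gt1 : (1 < #[x]%g)%N.
  rewrite ltn_neqAle order_gt0 andbT eq_sym; apply: contra ntA => /eqP ox1.
  by rewrite trivg_exponent expA ox1.
apply: (delta_expansion_complement cAA complH).
  exact: delta_expansion_cycle (dvdn_prim_root w_prim dvd_x_n) ox_unit.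
apply: IHm; [|exact: abelianS sHA cAA|exact: dvdn_trans (cardSg sHA) dvdAn].
rewrite -ltnS (leq_trans _ leAm) // ltnS -defA TI_cardMg //.
by rewrite -[ltnLHS]mul1n ltn_mul2r ox_gt1 cardG_gt0.
Qed.

End DeltaExpansion.

Lemma coprime_add_mul_part (u m n : nat) : (0 < u)%N -> (0 < n)%N -> coprime u m ->
  coprime (u + n`_(\pi(u)^') * m)%N n.
Proof.
move=> u_gt0 n_gt0 co_um; set t := (n`_(\pi(u)^'))%N.
rewrite coprime_has_primes ?ltn_addr //; apply/hasPn => q.
rewrite !mem_primes => /and3P[q_pr _ q_n]; apply/negP => /and3P[_ _ q_a].
have q_t : (q %| t)%N = ~~ (q %| u)%N.
  have := pi_of_part (\pi(u)^') n_gt0 q.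
  by rewrite !inE /= !mem_primes q_pr u_gt0 n_gt0 q_n part_gt0.
have [q_u|q_u] := boolP (q %| u)%N.
  have q_m : ~~ (q %| m)%N by rewrite -prime_coprime // (coprime_dvdl q_u co_um).
  by move: q_a; rewrite dvdn_addr // Euclid_dvdM // q_t q_u (negPf q_m).
by move: q_a; rewrite dvdn_addl ?dvdn_mulr ?q_t // (negPf q_u).
Qed.

Section ZpUnits.
Variable N : nat.
Hypothesis N_gt1 : (1 < N)%N.
Local Notation G := {unit 'Z_N}.

Lemma Zp_val_lt (x : 'Z_N) : (val x < N)%N.
Proof. by rewrite (leq_trans (ltn_ord x)) // Zp_cast. Qed.

Lemma Zp_unit_coprime (a : G) : coprime N (val (val a)).
Proof. by have := valP a; rewrite -{1}(natr_Zp (val a)) unitZpE. Qed.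

Lemma val_natr_mul_unit (g : nat) (a : G) :
  val (g%:R * val a : 'Z_N) = (g * val (val a) %% N)%N.
Proof. by rewrite -{1}(natr_Zp (val a)) -natrM; apply: val_Zp_nat. Qed.

Lemma gcdn_natr_mul_unit (g : nat) (a : G) :
  (g %| N)%N -> gcdn (val (g%:R * val a : 'Z_N)) N = g.
Proof.
move=> g_N; rewrite val_natr_mul_unit gcdn_modl.
by rewrite gcdnC Gauss_gcdl ?Zp_unit_coprime //; apply/gcdn_idPr.
Qed.

Lemma gcdn_Zp_eqN (u : 'Z_N) : (gcdn (val u) N == N) = (u == 0).
Proof.
apply/idP/eqP => [/eqP/gcdn_idPr N_u|->]; last by rewrite gcd0n.
apply: val_inj; apply/eqP; apply: contraTT (Zp_val_lt u).
by rewrite -lt0n -leqNgt => u_gt0; apply: dvdn_leq.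
Qed.

Lemma unimodE (u v : 'Z_N) :
  unimod u v = coprime (gcdn (val u) N) (gcdn (val v) N).
Proof. by rewrite /unimod /coprime gcdnACA gcdnn. Qed.

Lemma Zp_gcdn_unit_decomp (u : 'Z_N) :
  exists a : G, u = (gcdn (val u) N)%:R * val a.
Proof.
have N_gt0 : (0 < N)%N by apply: ltnW.
have [u0|u_gt0] := posnP (val u).
  by exists 1%g; apply: val_inj; rewrite u0 gcd0n mulr1 /= val_Zp_nat // modnn.
set g := gcdn (val u) N.
have g_gt0 : (0 < g)%N by rewrite gcdn_gt0 N_gt0 orbT.
have [u' def_u] : exists u', val u = (u' * g)%N by apply/dvdnP/dvdn_gcdl.
have [m def_N] : exists m, N = (m * g)%N by apply/dvdnP/dvdn_gcdr.
have u'_gt0 : (0 < u')%N by move: u_gt0; rewrite def_u muln_gt0 => /andP[].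
have co_u'm : coprime u' m.
  by rewrite /coprime -(eqn_pmul2r g_gt0) mul1n muln_gcdl -def_u -def_N.
set a0 := (u' + N`_(\pi(u')^') * m)%N.
have a0_unit : (a0%:R : 'Z_N) \is a GRing.unit.
  by rewrite unitZpE // coprime_sym coprime_add_mul_part.
exists (FinRing.unit _ a0_unit); apply: val_inj.
rewrite val_natr_mul_unit /= val_Zp_nat // modnMmr.
rewrite /a0 mulnDr mulnCA (mulnC g u') -def_u (mulnC g m) -def_N.
by rewrite addnC modnMDl modn_small ?Zp_val_lt.
Qed.

End ZpUnits.

Section UnitCharacters.
Variables (N : nat) (O : idomainType).
Local Notation G := {unit 'Z_N}.

Lemma char_mulV (chi : G -> O) : is_char chi -> forall a, chi a * chi a^-1%g = 1.
Proof. by case=> chi1 chiM a; rewrite -chiM mulgV. Qed.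

Lemma units_Zp_mulC (a b : G) : (a * b = b * a)%g.
Proof. by apply: val_inj; rewrite !FinRing.val_unitM mulrC. Qed.

Lemma units_Zp_delta_expansion :
  (0 < N)%N -> (totient N)%:R \is a @GRing.unit O ->
  (exists zeta : O, (totient N).-primitive_root zeta) ->
  exists (I : finType) (c : I -> O) (chi : I -> G -> O),
    (forall i, is_char (chi i)) /\ forall z, \sum_i c i * chi i z = (z == 1%g)%:R.
Proof.
move=> N_gt0 phi_unit [zeta zeta_prim].
have cGG : abelian [set: G] := units_Zp_abelian N.
have dvd_phi : (#|[set: G]%G| %| totient N)%N by rewrite /= -card_units_Zp.
have [I [c [chi [chi_char delta]]]] :=
  delta_expansion_abelian zeta_prim phi_unit cGG dvd_phi.
exists I, c, chi; split=> [i|z]; last by apply: delta; rewrite inE.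
by have [chi1 chiM] := chi_char i; split=> // a b; apply: chiM; rewrite inE.
Qed.

End UnitCharacters.

Section ModularSymbols.
Variables (N : nat) (O : idomainType) (cusp : bool) (V : lmodType O).
Variables (sym : 'Z_N -> 'Z_N -> V) (diam : {unit 'Z_N} -> V -> V).
Variable theta : {unit 'Z_N} -> O.
Hypothesis N_gt1 : (1 < N)%N.
Hypothesis modsym : modsym_space cusp sym diam.
Hypothesis theta_char : is_char theta.
Hypothesis phi_unit : (totient N)%:R \is a @GRing.unit O.

Local Notation G := {unit 'Z_N}.
Local Notation phi := ((totient N)%:R : O).
Local Notation e_theta := (etheta diam theta).

Let N_gt0 : (0 < N)%N. Proof. exact: ltnW. Qed.
Let diam_Olinear a : Olinear (diam a).
Proof. by have [_ [_ _ _ lin _]] := modsym; apply: lin. Qed.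
Let diam_sym a u v :
  valid_pair cusp u v -> diam a (sym u v) = sym (val a * u) (val a * v).
Proof. by have [_ [_ _ _ _ dsym]] := modsym; apply: dsym. Qed.
Let sym_swap u v : valid_pair cusp u v -> sym u v = - sym (- v) u.
Proof. by have [_ [_ swap _ _ _]] := modsym; apply: swap. Qed.

Definition sym_mul (g h : nat) (a b : G) : V := sym (g%:R * val a) (h%:R * val b).

Definition admissible (g h : nat) : Prop :=
  [/\ (g %| N)%N, (h %| N)%N, coprime g h & cusp ==> (g != N) && (h != N)].

Lemma valid_pair_gcdnP (u v : 'Z_N) :
  valid_pair cusp u v <-> admissible (gcdn (val u) N) (gcdn (val v) N).
Proof.
rewrite /valid_pair /admissible unimodE -!(gcdn_Zp_eqN N_gt1).
split=> [/andP[co cu]|[_ _ -> ->] //]; by split; rewrite ?dvdn_gcdr.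
Qed.

Lemma valid_pair_admissible g h (a b : G) :
  admissible g h -> valid_pair cusp (g%:R * val a) (h%:R * val b).
Proof.
by case=> g_N h_N *; apply/valid_pair_gcdnP; rewrite !gcdn_natr_mul_unit.
Qed.

Lemma mul_dvdN_neq k d : (1 < k)%N -> (k * d %| N)%N -> d != N.
Proof. by move=> k_gt1 /(dvdn_leq N_gt0); apply: contraTneq => ->; nia. Qed.

Lemma admissible_dvdl g g' h :
  admissible g h -> (g' %| g)%N -> g' != N -> admissible g' h.
Proof.
case=> g_N h_N co_gh cu g'_g g'_neqN; split=> //.
- exact: dvdn_trans g'_g g_N.
- exact: coprime_dvdl g'_g co_gh.
- by case: cusp cu => //= /andP[_ ->]; rewrite andbT.
Qed.

Lemma admissible_sym g h : admissible g h -> admissible h g.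
Proof. by case=> g_N h_N co_gh cu; split; rewrite 1?coprime_sym // andbC. Qed.

Lemma diam_sym_mul g h (a b d : G) :
  admissible g h -> diam d (sym_mul g h a b) = sym_mul g h (d * a)%g (d * b)%g.
Proof.
move=> adm; rewrite diam_sym ?valid_pair_admissible // /sym_mul !FinRing.val_unitM.
by congr sym; rewrite mulrCA.
Qed.

Lemma alpha_in_span_sym g h chi psi :
  in_span (fun y => exists a b, y = sym_mul g h a b) (alpha sym g h chi psi).
Proof.
apply/in_spanZ/in_span_sum => a _; apply/in_span_sum => b _.
by apply/in_spanZ/in_span_gen; exists a, b.
Qed.

Lemma diam_alpha g h chi psi (d : G) :
  admissible g h -> is_char chi -> is_char psi ->
  diam d (alpha sym g h chi psi) = (chi d * psi d) *: alpha sym g h chi psi.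
Proof.
move=> adm chi_char psi_char; rewrite /alpha OlinearZ // Olinear_sum //.
under eq_bigr do rewrite Olinear_sum //.
under eq_bigr do under eq_bigr do rewrite OlinearZ // diam_sym_mul //.
rewrite [in RHS]scalerA [in RHS]mulrC -scalerA; congr (_ *: _).
rewrite scaler_sumr [RHS](reindex_inj (mulgI d)); apply: eq_bigr => a _.
rewrite scaler_sumr [RHS](reindex_inj (mulgI d)); apply: eq_bigr => b _.
rewrite scalerA !invMg (proj2 chi_char) (proj2 psi_char); congr (_ *: _).
by rewrite [RHS]mulrACA (mulrCA (chi d)) (mulrCA (psi d)) !char_mulV // !mulr1.
Qed.

Lemma etheta_Olinear : Olinear e_theta.
Proof.
move=> k x y; rewrite /etheta.
under eq_bigr do rewrite diam_Olinear scalerDr scalerA mulrC -scalerA.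
by rewrite big_split /= scalerDr -scaler_sumr scalerA mulrC -scalerA.
Qed.

Definition psi_of (chi : G -> O) : G -> O := fun b => theta b * chi b^-1%g.

Lemma psi_of_char chi : is_char chi -> is_char (psi_of chi).
Proof.
case=> chi1 chiM; have [theta1 thetaM] := theta_char.
split=> [|a b]; first by rewrite /psi_of invg1 chi1 theta1 mulr1.
by rewrite /psi_of invMg chiM thetaM [chi _ * _]mulrC mulrACA.
Qed.

Lemma psi_ofK chi : is_char chi -> psi_of (psi_of chi) =1 chi.
Proof.
by move=> chi_char b; rewrite /psi_of invgK mulrA (char_mulV theta_char) mul1r.
Qed.

Lemma etheta_alpha g h chi : admissible g h -> is_char chi ->
  e_theta (alpha sym g h chi (psi_of chi)) = alpha sym g h chi (psi_of chi).
Proof.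
move=> adm chi_char; set x := alpha _ _ _ _ _.
have psi_char := psi_of_char chi_char.
have fix_x a : theta a^-1%g *: diam a x = x.
  rewrite diam_alpha // scalerA /psi_of (mulrCA (chi a)).
  by rewrite char_mulV // mulr1 mulrC char_mulV // scale1r.
rewrite /etheta (eq_bigr _ (fun a _ => fix_x a)) sumr_const cardT -cardE -cardsT.
by rewrite card_units_Zp // -scaler_nat scalerA mulVr // scale1r.
Qed.

Definition alpha_set g h (x : V) : Prop :=
  exists chi, is_char chi /\ x = alpha sym g h chi (psi_of chi).

Lemma sum_char_alpha g h (I : finType) (c : I -> O) (chi : I -> G -> O) (x : G) :
  (forall i, is_char (chi i)) -> (forall z, \sum_i c i * chi i z = (z == 1%g)%:R) ->
  \sum_i (c i * chi i x) *: alpha sym g h (chi i) (psi_of (chi i)) =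
  (phi ^+ 2)^-1 *: \sum_(b : G) theta b^-1%g *: sym_mul g h (x * b)%g b.
Proof.
move=> chi_char delta; set k := (phi ^+ 2)^-1.
have -> : \sum_(b : G) theta b^-1%g *: sym_mul g h (x * b)%g b =
    \sum_(a : G) \sum_(b : G) (theta b^-1%g * (x * b == a)%g%:R) *: sym_mul g h a b.
  rewrite exchange_big /=; apply: eq_bigr => b _.
  rewrite (bigD1 (x * b)%g) //= eqxx mulr1 big1 ?addr0 // => a /negPf.
  by rewrite eq_sym => ->; rewrite mulr0 scale0r.
rewrite /alpha; under eq_bigr do rewrite scalerA [_ * k]mulrC -scalerA scaler_sumr.
rewrite -scaler_sumr; congr (k *: _).
rewrite exchange_big /=; apply: eq_bigr => a _.
under eq_bigr do rewrite scaler_sumr.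
rewrite exchange_big /=; apply: eq_bigr => b _.
under eq_bigr do rewrite scalerA.
rewrite -scaler_suml; congr (_ *: _).
rewrite eq_mulgV1 -delta mulr_sumr; apply: eq_bigr => i _.
by rewrite /psi_of invgK !(proj2 (chi_char i)); ring.
Qed.

Hypothesis phi_root : exists zeta : O, (totient N).-primitive_root zeta.

Lemma etheta_sym_mul g h (a b : G) : admissible g h ->
  e_theta (sym_mul g h a b) =
  phi^-1 *: \sum_(d : G) theta d^-1%g *: sym_mul g h (d * a)%g (d * b)%g.
Proof.
by move=> adm; congr (_ *: _); apply: eq_bigr => d _; rewrite diam_sym_mul.
Qed.

Lemma etheta_sym_mul_in_span g h (a b : G) :
  admissible g h -> in_span (alpha_set g h) (e_theta (sym_mul g h a b)).
Proof.
move=> adm; have [I [c [chi [chi_char delta]]]] :=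
  units_Zp_delta_expansion N_gt0 phi_unit phi_root.
pose x := (a * b^-1)%g.
suff -> : e_theta (sym_mul g h a b) = (phi * theta b) *:
    \sum_i (c i * chi i x) *: alpha sym g h (chi i) (psi_of (chi i)).
  apply/in_spanZ/in_span_sum => i _; apply/in_spanZ/in_span_gen.
  by exists (chi i).
rewrite sum_char_alpha // etheta_sym_mul // scalerA.
rewrite [X in _ = _ *: X](reindex_inj (mulIg b)).
rewrite !scaler_sumr; apply: eq_bigr => d _.
have -> : (x * (d * b) = d * a)%g.
  by rewrite /x [(d * b)%g]units_Zp_mulC mulgA mulgKV units_Zp_mulC.
rewrite !scalerA invMg (proj2 theta_char); congr (_ *: _).
transitivity ((phi * phi^-1) * (theta b * theta b^-1%g) * (phi^-1 * theta d^-1%g)).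
  by rewrite mulrV // char_mulV // !mul1r.
by rewrite expr2 invrM //; ring.
Qed.

Lemma etheta_sym_in_span u v : valid_pair cusp u v ->
  in_span (alpha_set (gcdn (val u) N) (gcdn (val v) N)) (e_theta (sym u v)).
Proof.
move=> uv; have [a def_u] := Zp_gcdn_unit_decomp N_gt1 u.
have [b def_v] := Zp_gcdn_unit_decomp N_gt1 v.
have -> : sym u v = sym_mul (gcdn (val u) N) (gcdn (val v) N) a b.
  by rewrite /sym_mul -def_u -def_v.
by apply: etheta_sym_mul_in_span; apply/valid_pair_gcdnP.
Qed.

Variables (ell : nat) (U : V -> V) (c : O).
Hypothesis ell_prime : prime ell.
Hypothesis U_ell : U_op cusp sym diam ell U.
Hypothesis c_unit : c \is a GRing.unit.
Hypothesis U_etheta : forall x, (exists y, x = e_theta y) -> U x = c *: x.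

Lemma gcdn_shift_mul_unit g (a : G) (k : nat) : (ell * ell * g %| N)%N ->
  gcdn (val (g%:R * val a + (k * (N %/ ell))%:R : 'Z_N)) N = g.
Proof.
case/dvdnP=> m def_N; have ell_gt0 := prime_gt0 ell_prime.
have -> : (N %/ ell = g * (ell * m))%N.
  by rewrite def_N (_ : m * _ = ell * (g * (ell * m)))%N ?mulKn //; ring.
rewrite -(natr_Zp (val a)) -natrM -natrD /= val_Zp_nat // gcdn_modl.
set A := val (val a).
have -> : (N = (ell * (ell * m)) * g)%N by rewrite def_N; ring.
have -> : (g * A + k * (g * (ell * m)) = (A + k * (ell * m)) * g)%N by ring.
rewrite -muln_gcdl.
suff /eqP -> : coprime (A + k * (ell * m)) (ell * (ell * m)) by rewrite mul1n.
have co_A : coprime (A + k * (ell * m)) (ell * m).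
  rewrite coprime_sym /coprime addnC gcdnMDl.
  apply: (coprime_dvdl _ (Zp_unit_coprime N_gt1 a)).
  by rewrite def_N; apply/dvdnP; exists (ell * g)%N; ring.
by rewrite coprimeMr co_A (coprime_dvdr _ co_A) ?dvdn_mulr.
Qed.

Lemma alpha_ell_in_span g h chi : (ell * ell * g %| N)%N -> admissible (ell * g) h ->
  is_char chi -> in_span (alpha_set g h) (alpha sym (ell * g) h chi (psi_of chi)).
Proof.
move=> dvd_N adm chi_char; set x := alpha _ _ _ _ _.
have [U_lin _ U_sym] := U_ell.
have adm_g : admissible g h.
  apply: admissible_dvdl adm (dvdn_mull _ (dvdnn g)) (mul_dvdN_neq _ dvd_N).
  by have := prime_gt1 ell_prime; nia.
have x_fix : e_theta x = x := etheta_alpha adm chi_char.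
have -> : x = c^-1 *: e_theta (U x).
  rewrite U_etheta; last by exists x.
  by rewrite (OlinearZ etheta_Olinear) x_fix scalerA mulVr // scale1r.
apply/in_spanZ/(Olinear_in_span (Olinear_comp etheta_Olinear U_lin));
  last exact: alpha_in_span_sym.
move=> _ [a [b ->]]; rewrite /= /sym_mul natrM -mulrA U_sym; last first.
  by rewrite mulrA -natrM valid_pair_admissible.
rewrite Olinear_sum; last exact: etheta_Olinear.
apply: in_span_sum => k _.
have [g_N h_N co_gh cu] := adm_g.
rewrite -{1}(gcdn_shift_mul_unit a k dvd_N) -{1}(gcdn_natr_mul_unit N_gt1 b h_N).
apply: etheta_sym_in_span; apply/valid_pair_gcdnP.
by rewrite gcdn_shift_mul_unit // gcdn_natr_mul_unit.
Qed.

Definition generators (x : V) : Prop :=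
  exists (chi : G -> O) (g h : nat),
    [/\ is_char chi, (g %| N)%N, (h %| N)%N, coprime g h & ~~ (ell %| g * h)%N] /\
    let psi := fun b => theta b * chi (b^-1)%g in
    (  (~~ (cusp && ((g == N) || (h == N))) /\ x = alpha sym g h chi psi)
    \/ (~~ (cusp && (((ell ^ logn ell N * g)%N == N) || (h == N))) /\
        x = alpha sym (ell ^ logn ell N * g)%N h chi psi)).

Lemma ellpow_mul_dvdN t g :
  (t <= logn ell N)%N -> ~~ (ell %| g)%N -> (g %| N)%N -> (ell ^ t * g %| N)%N.
Proof.
move=> le_t ell_g g_N; rewrite Gauss_dvd ?coprimeXl ?prime_coprime //.
by rewrite pfactor_dvdn // le_t.
Qed.

Lemma generators_alpha g h chi : admissible g h -> ~~ (ell %| g * h)%N -> is_char chi ->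
  generators (alpha sym g h chi (psi_of chi)).
Proof.
case=> g_N h_N co_gh cu ell_gh chi_char; exists chi, g, h; split=> //.
by left; split=> //; case: cusp cu => //=; rewrite negb_or.
Qed.

Lemma generators_alpha_ellpow g h chi : admissible (ell ^ logn ell N * g) h ->
  ~~ (ell %| g * h)%N -> is_char chi ->
  generators (alpha sym (ell ^ logn ell N * g) h chi (psi_of chi)).
Proof.
case=> g_N h_N co_gh cu ell_gh chi_char; exists chi, g, h; split.
  split=> //; first exact: dvdn_trans (dvdn_mull _ (dvdnn g)) g_N.
  exact: coprime_dvdl (dvdn_mull _ (dvdnn g)) co_gh.
by right; split=> //; case: cusp cu => //=; rewrite negb_or.
Qed.

Lemma alpha_ellpow_in_span_generators t g h chi :
  (t <= logn ell N)%N -> ~~ (ell %| g * h)%N -> admissible (ell ^ t * g) h ->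
  is_char chi -> in_span generators (alpha sym (ell ^ t * g) h chi (psi_of chi)).
Proof.
have ell_gt1 := prime_gt1 ell_prime.
elim: t chi => [|t IHt] chi le_t ell_gh adm chi_char.
  by rewrite expn0 mul1n in adm *; apply/in_span_gen/generators_alpha.
have [def_t|lt_t] := eqVneq t.+1 (logn ell N).
  by rewrite def_t in adm *; apply/in_span_gen/generators_alpha_ellpow.
have [g_N _ _ _] := adm; have ell_g : ~~ (ell %| g)%N.
  by apply: contra ell_gh; apply: dvdn_mulr.
have g_N' : (g %| N)%N := dvdn_trans (dvdn_mull _ (dvdnn g)) g_N.
rewrite expnS -mulnA; apply: in_span_trans (alpha_ell_in_span _ _ chi_char).
- move=> _ [chi' [chi'_char ->]]; apply: IHt => //; first exact: ltnW.
  apply: admissible_dvdl adm _ (mul_dvdN_neq ell_gt1 _).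
    by rewrite expnS -mulnA dvdn_mull.
  by rewrite mulnA -expnS.
- rewrite (_ : ell * ell * _ = ell ^ t.+2 * g)%N ?ellpow_mul_dvdN //.
    by rewrite ltn_neqAle lt_t le_t.
  by rewrite !expnS; ring.
- by rewrite mulnA -expnS.
Qed.

Definition unitN1 : G := FinRing.Unit (unitrN1 'Z_N).

Lemma eq_alpha g h chi psi1 psi2 : psi1 =1 psi2 ->
  alpha sym g h chi psi1 = alpha sym g h chi psi2.
Proof.
move=> eq_psi; congr (_ *: _); apply: eq_bigr => a _.
by apply: eq_bigr => b _; rewrite eq_psi.
Qed.

Lemma alpha_swap g h chi psi : admissible g h -> is_char psi ->
  alpha sym g h chi psi = (- psi unitN1) *: alpha sym h g psi chi.
Proof.
move=> adm psi_char; rewrite /alpha !scalerA mulrC -scalerA; congr (_ *: _).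
rewrite exchange_big /= scaler_sumr [RHS](reindex_inj (mulgI unitN1)).
apply: eq_bigr => b _; rewrite scaler_sumr; apply: eq_bigr => a _.
rewrite sym_swap ?valid_pair_admissible // scalerN scalerA -scaleNr.
have val_N1b : val (unitN1 * b)%g = - val b by rewrite FinRing.val_unitM mulN1r.
rewrite val_N1b mulrN; congr (_ *: _).
rewrite invMg (proj2 psi_char) -[LHS]mulr1 -(char_mulV psi_char unitN1); ring.
Qed.

Lemma alpha_in_span_generators_ndvdr g h chi : admissible g h -> ~~ (ell %| h)%N ->
  is_char chi -> in_span generators (alpha sym g h chi (psi_of chi)).
Proof.
move=> adm ell_h chi_char; have [g_N _ _ _] := adm.
have g_gt0 : (0 < g)%N := dvdn_gt0 N_gt0 g_N.
have def_g : g = (ell ^ logn ell g * g`_(ell^'))%N by rewrite -p_part partnC.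
have ell_g' : ~~ (ell %| g`_(ell^'))%N by rewrite -(p'natE _ ell_prime) part_pnat.
rewrite def_g in adm *; apply: alpha_ellpow_in_span_generators => //.
  exact: dvdn_leq_log.
by rewrite Euclid_dvdM // negb_or ell_g'.
Qed.

Lemma alpha_in_span_generators g h chi : admissible g h -> is_char chi ->
  in_span generators (alpha sym g h chi (psi_of chi)).
Proof.
move=> adm chi_char; have [ell_h|ell_h] := boolP (ell %| h)%N; last first.
  exact: alpha_in_span_generators_ndvdr.
have psi_char := psi_of_char chi_char.
rewrite alpha_swap // -(eq_alpha _ _ _ (psi_ofK chi_char)); apply/in_spanZ.
apply: alpha_in_span_generators_ndvdr (admissible_sym adm) _ psi_char.
have [_ _ co_gh _] := adm; apply: contraL ell_h => ell_g.
by rewrite -prime_coprime // (coprime_dvdl ell_g co_gh).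
Qed.

Lemma etheta_in_span_generators y : in_span generators (e_theta y).
Proof.
have [span_sym _] := modsym.
apply: (Olinear_in_span etheta_Olinear _ (span_sym y)) => _ [u [v [uv ->]]].
apply: in_span_trans (etheta_sym_in_span uv) => _ [chi [chi_char ->]].
by apply: alpha_in_span_generators => //; apply/valid_pair_gcdnP.
Qed.

Lemma etheta_generators x : generators x -> e_theta x = x.
Proof.
case=> chi [g [h [[chi_char g_N h_N co_gh ell_gh] /= [[cu ->]|[cu ->]]]]].
  apply: (etheta_alpha _ chi_char); split=> //.
  by case: cusp cu => // /norP[-> ->].
move: ell_gh; rewrite Euclid_dvdM // negb_or => /andP[ell_g ell_h].
apply: (etheta_alpha _ chi_char); split=> //.
- exact: ellpow_mul_dvdN.
- by rewrite coprimeMl co_gh coprimeXl ?prime_coprime.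
- by case: cusp cu => // /norP[-> ->].
Qed.

End ModularSymbols.

Theorem corollary2p21
  (p M N : nat) (hp : prime p) (hpodd : odd p) (hM : (0 < M)%N)
  (hpM : ~~ (p %| M * totient M)%N) (hN : N = (M * p)%N)
  (O : idomainType)
  (hOunit : (totient N)%:R \is a @GRing.unit O)
  (hOroot : exists zeta : O, (totient N).-primitive_root zeta)
  (cusp : bool) (V : lmodType O)
  (sym : 'Z_N -> 'Z_N -> V) (diam : {unit 'Z_N} -> V -> V)
  (hV : modsym_space cusp sym diam)
  (ell : nat) (hell : prime ell) (hellN : (ell %| N)%N)
  (theta : {unit 'Z_N} -> O) (htheta : is_char_Delta theta)
  (U : V -> V) (hU : U_op cusp sym diam ell U)
  (c : O) (hc : c \is a GRing.unit)
  (hUc : forall x : V, (exists y : V, x = etheta diam theta y) -> U x = c *: x) :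
  let s := logn ell N in
  let gens : V -> Prop := fun x =>
    exists (chi : {unit 'Z_N} -> O) (g h : nat),
      [/\ is_char chi, (g %| N)%N, (h %| N)%N, coprime g h & ~~ (ell %| g * h)%N] /\
      let psi := fun b => theta b * chi (b^-1)%g in
      (  (~~ (cusp && ((g == N) || (h == N))) /\ x = alpha sym g h chi psi)
      \/ (~~ (cusp && (((ell ^ s * g)%N == N) || (h == N))) /\
          x = alpha sym (ell ^ s * g)%N h chi psi)) in
  forall x : V, (exists y : V, x = etheta diam theta y) <-> in_span gens x.
Proof.
have N_gt1 : (1 < N)%N by rewrite hN; have := prime_gt1 hp; nia.
have [theta_char _] := htheta.
move=> s gens x; split=> [[y ->]|span_x].
  exact: (etheta_in_span_generators N_gt1 hV theta_char hOunit hOroot hell hU hc hUc y).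
exists x; symmetry; apply: (Olinear_fix_in_span (etheta_Olinear theta hV) _ span_x).
exact: (etheta_generators N_gt1 hV theta_char hOunit hell).
Qed.
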